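(* Let $G$ be a finite group. Then $h\mathrm{aut}(\jmath S(G))\cong\mathrm{Aut}(G)$ as groups.
   Context: For a finite group $G$, $S(G)=(G,[G])$ is the association scheme with $[G]=\{G_f\}_{f\in G}$, $G_f=\{(k,l)\in G\times G\mid k^{-1}l=f\}$. For an association scheme $(X,S)$ (finite set $X$ with a suitable partition $S$ of $X\times X$), the quasi-schemoid $\jmath(X,S)=(\mathcal{C},S)$ has $ob(\mathcal{C})=X$, $\mathrm{Hom}_{\mathcal{C}}(y,x)=\{(x,y)\}$, composition $(z,x)\circ(x,y)=(z,y)$, and partition $S$ of $mor(\mathcal{C})=X\times X$. A quasi-schemoid is a small category with a partition of its morphisms such that for blocks $\sigma,\tau,\mu$ and $f,g\in\mu$ the number of composable pairs $(a,b)\in\sigma\times\tau$ with $a\circ b=f$ equals that with $a\circ b=g$; a morphism of quasi-schemoids is a functor sending each block of the source partition into some block of the target partition. Product: $(\mathcal{C},S)\times(\mathcal{E},S')=(\mathcal{C}\times\mathcal{E},\{\sigma\times\tau\})$. $[1]$ has objects $0,1$ and one non-identity morphism $0\to1$; $I=([1],\{\{f\}\}_f)$. A homotopy $H\colon F\Rightarrow F'$ is a morphism $H\colon(\mathcal{C},S)\times I\to(\mathcal{D},S')$ with $H\circ\varepsilon_0=F$, $H\circ\varepsilon_1=F'$ ($\varepsilon_i(a)=(a,i)$, $\varepsilon_i(f)=(f,1_i)$). $F\sim F'$ means there is a homotopy $F\Rightarrow F'$ or $F'\Rightarrow F$; $F\simeq F'$ means a finite chain $F=F_0\sim\cdots\sim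 F_n=F'$. $h\mathrm{aut}(A)$ is the group of $\simeq$-classes of self-homotopy equivalences of $A$ (morphisms $F\colon A\to A$ with some $F'$ satisfying $FF'\simeq1$, $F'F\simeq1$) under composition. $\mathrm{Aut}(G)$ is the automorphism group of $G$. *)

From mathcomp Require Import all_boot all_fingroup.
From Stdlib Require Import Relation_Operators.

Set Implicit Arguments.
Unset Strict Implicit.
Unset Printing Implicit Defensive.

(* Small categories, presented by objects, morphisms, domain/codomain, *)
(* identities and a (total) composition operation which is only        *)
(* meaningful on composable pairs (c_dom a = c_cod b).                 *)
Record cat := Cat {
  c_ob : Type;
  c_mor : Type;
  c_dom : c_mor -> c_ob;
  c_cod : c_mor -> c_ob;
  c_id : c_ob -> c_mor;
  c_comp : c_mor -> c_mor -> c_mor;   (* c_comp a b = a o b *)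
  c_dom_id : forall x, c_dom (c_id x) = x;
  c_cod_id : forall x, c_cod (c_id x) = x;
  c_dom_comp : forall a b, c_dom a = c_cod b -> c_dom (c_comp a b) = c_dom b;
  c_cod_comp : forall a b, c_dom a = c_cod b -> c_cod (c_comp a b) = c_cod a;
  c_comp_idl : forall a, c_comp (c_id (c_cod a)) a = a;
  c_comp_idr : forall a, c_comp a (c_id (c_dom a)) = a;
  c_comp_assoc : forall a b c, c_dom a = c_cod b -> c_dom b = c_cod c ->
      c_comp a (c_comp b c) = c_comp (c_comp a b) c
}.

Record functor (C D : cat) := Functor {
  fob : c_ob C -> c_ob D;
  fmor : c_mor C -> c_mor D;
  f_dom : forall a, c_dom (fmor a) = fob (c_dom a);
  f_cod : forall a, c_cod (fmor a) = fob (c_cod a);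
  f_id : forall x, fmor (c_id x) = c_id (fob x);
  f_comp : forall a b, c_dom a = c_cod b ->
      fmor (c_comp a b) = c_comp (fmor a) (fmor b)
}.

Section FunctorOps.
Variables C D E : cat.

Program Definition fcomp (G : functor D E) (F : functor C D) : functor C E :=
  @Functor C E (fun x => fob G (fob F x)) (fun a => fmor G (fmor F a)) _ _ _ _.
Next Obligation. by move=> G F a /=; rewrite !f_dom. Qed.
Next Obligation. by move=> G F a /=; rewrite !f_cod. Qed.
Next Obligation. by move=> G F x /=; rewrite !f_id. Qed.
Next Obligation.
move=> G F a b H /=; rewrite (f_comp F H) f_comp //.
by rewrite f_dom f_cod H.
Qed.

Program Definition fid : functor C C :=
  @Functor C C (fun x => x) (fun a => a) _ _ _ _.
Solve All Obligations with (intros; reflexivity).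

Definition feq (F G : functor C D) : Prop :=
  (forall x, fob F x = fob G x) /\ (forall a, fmor F a = fmor G a).
End FunctorOps.

Program Definition prod_cat (C E : cat) : cat :=
  @Cat (c_ob C * c_ob E) (c_mor C * c_mor E)
    (fun m => (c_dom m.1, c_dom m.2)) (fun m => (c_cod m.1, c_cod m.2))
    (fun x => (c_id x.1, c_id x.2))
    (fun a b => (c_comp a.1 b.1, c_comp a.2 b.2)) _ _ _ _ _ _ _.
Next Obligation. by move=> C E [x y] /=; rewrite !c_dom_id. Qed.
Next Obligation. by move=> C E [x y] /=; rewrite !c_cod_id. Qed.
Next Obligation.
move=> C E [a1 a2] [b1 b2] /= [H1 H2].
by rewrite !c_dom_comp.
Qed.
Next Obligation.
move=> C E [a1 a2] [b1 b2] /= [H1 H2].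
by rewrite !c_cod_comp.
Qed.
Next Obligation. by move=> C E [a1 a2] /=; rewrite !c_comp_idl. Qed.
Next Obligation. by move=> C E [a1 a2] /=; rewrite !c_comp_idr. Qed.
Next Obligation.
move=> C E [a1 a2] [b1 b2] [d1 d2] /= [H1 H2] [H3 H4].
by rewrite !c_comp_assoc.
Qed.

(* The category [1]: objects 0 (false), 1 (true); one non-identity
   morphism 0 -> 1. *)
Inductive arr1 := a00 | a11 | a01.

Definition arr1_dom (m : arr1) : bool :=
  match m with a00 => false | a11 => true | a01 => false end.
Definition arr1_cod (m : arr1) : bool :=
  match m with a00 => false | a11 => true | a01 => true end.
Definition arr1_id (i : bool) : arr1 := if i then a11 else a00.
Definition arr1_comp (a b : arr1) : arr1 :=
  match a, b with
  | a11, a11 => a11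
  | a11, a01 => a01
  | a01, a00 => a01
  | a00, a00 => a00
  | _, _ => a (* non-composable pairs: junk value *)
  end.

Program Definition cat1 : cat :=
  @Cat bool arr1 arr1_dom arr1_cod arr1_id arr1_comp _ _ _ _ _ _ _.
Next Obligation. by case. Qed.
Next Obligation. by case. Qed.
Next Obligation. by case; case. Qed.
Next Obligation. by case; case. Qed.
Next Obligation. by case. Qed.
Next Obligation. by case. Qed.
Next Obligation. by case; case; case. Qed.

(* mor(C) is represented by a labelling  q_lab : mor(C) -> q_blk ;     *)
(* the blocks of S are the (nonempty) fibres of q_lab.                 *)
Record qsch := QS {
  q_cat : cat;
  q_blk : Type;
  q_lab : c_mor q_cat -> q_blk
}.

(* The quasi-schemoid axiom (recorded for documentation; it is not
   needed to define homotopies or haut): for blocks s, t and f, g in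
   the same block, the sets of composable pairs (a,b) in s x t with
   a o b = f, resp. = g, are in bijection. *)
Definition comp_pairs (A : qsch) (s t : q_blk A) (f : c_mor (q_cat A)) :=
  {p : c_mor (q_cat A) * c_mor (q_cat A) |
     [/\ q_lab p.1 = s, q_lab p.2 = t, c_dom p.1 = c_cod p.2
       & c_comp p.1 p.2 = f]}.

Definition is_quasi_schemoid (A : qsch) : Prop :=
  forall (s t : q_blk A) (f g : c_mor (q_cat A)), q_lab f = q_lab g ->
    exists (phi : comp_pairs s t f -> comp_pairs s t g)
           (psi : comp_pairs s t g -> comp_pairs s t f),
      cancel phi psi /\ cancel psi phi.

Record qmor (A B : qsch) := QMor {
  qfun : functor (q_cat A) (q_cat B);
  q_block : forall a b, q_lab a = q_lab b ->
      q_lab (fmor qfun a) = q_lab (fmor qfun b)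
}.

Program Definition qcomp (A B C : qsch) (G : qmor B C) (F : qmor A B)
  : qmor A C := @QMor A C (fcomp (qfun G) (qfun F)) _.
Next Obligation. by move=> A B C G F a b H /=; apply: q_block; apply: q_block. Qed.

Program Definition qid (A : qsch) : qmor A A := @QMor A A (fid _) _.
Next Obligation. by []. Qed.

Definition qprod (A B : qsch) : qsch :=
  @QS (prod_cat (q_cat A) (q_cat B)) (q_blk A * q_blk B)
      (fun m => (q_lab m.1, q_lab m.2)).

Definition qI : qsch := @QS cat1 arr1 (fun m => m).

Program Definition eps (C : cat) (i : bool) : functor C (prod_cat C cat1) :=
  @Functor C (prod_cat C cat1) (fun a => (a, i)) (fun f => (f, @c_id cat1 i))
    _ _ _ _.
Next Obligation. by move=> C [] x. Qed.
Next Obligation. by move=> C [] x. Qed.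
Next Obligation. by move=> C [] x. Qed.
Next Obligation. by move=> C [] a b. Qed.

Definition homotopy (A B : qsch) (F F' : qmor A B) : Prop :=
  exists H : qmor (qprod A qI) B,
    feq (fcomp (qfun H) (eps (q_cat A) false)) (qfun F) /\
    feq (fcomp (qfun H) (eps (q_cat A) true)) (qfun F').

Definition qsim (A B : qsch) (F F' : qmor A B) : Prop :=
  homotopy F F' \/ homotopy F' F.

Definition qhtpc (A B : qsch) : qmor A B -> qmor A B -> Prop :=
  clos_refl_trans (qmor A B) (@qsim A B).

Definition self_heq (A : qsch) (F : qmor A A) : Prop :=
  exists F' : qmor A A,
    qhtpc (qcomp F F') (qid A) /\ qhtpc (qcomp F' F) (qid A).

(* The functor j from association schemes (X, S) (S given by a         *)
(* labelling of X x X) to quasi-schemoids, and S(G).                   *)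
Program Definition codiscrete_cat (X : Type) : cat :=
  (* Hom(y, x) = {(x, y)}, (z, x) o (x, y) = (z, y) *)
  @Cat X (X * X) (fun m => m.2) (fun m => m.1) (fun x => (x, x))
       (fun a b => (a.1, b.2)) _ _ _ _ _ _ _.
Solve All Obligations with (intros; repeat match goal with p : _ * _ |- _ => destruct p end; reflexivity).

Definition jmath (X B : Type) (lab : X * X -> B) : qsch :=
  @QS (codiscrete_cat X) B lab.

(* S(G) = (G, [G]), with (k, l) in G_f  iff  k^-1 l = f *)
Definition SG_lab (gT : finGroupType) (m : gT * gT) : gT := (m.1^-1 * m.2)%g.

Definition jSG (gT : finGroupType) : qsch := @jmath gT gT (@SG_lab gT).

From Pilot Require Import Defs.
From mathcomp Require Import all_boot all_fingroup.
From Stdlib Require Import Relation_Operators.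

Set Implicit Arguments.
Unset Strict Implicit.
Unset Printing Implicit Defensive.

(* A self-map F of j S(G) is determined by its object map f, and preserving
   blocks means that f(x)^-1 f(y) only depends on x^-1 y.  Hence
   psi(x) := f(x) f(1)^-1 is an endomorphism of G and f = psi * f(1) is psi
   followed by a right translation.  A homotopy F => F' sends the arrow
   ((x,x), 0 -> 1) to f(x)^-1 f'(x), which lies in the block of
   f(1)^-1 f'(1); so homotopic maps have the same psi.  Conversely two maps
   with the same psi differ by a right translation by some k, and
   (x, i) |-> f(x) k^i is a homotopy between them.  Thus homotopy classes of
   self-equivalences correspond to their endomorphisms psi, which are
   exactly the automorphisms of G. *)

Program Definition codiscrete_functor (C : Defs.cat) (X : Type) (h : c_ob C -> X) :
  functor C (codiscrete_cat X) :=
  @Functor C (codiscrete_cat X) h (fun m => (h (c_cod m), h (c_dom m))) _ _ _ _.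
Next Obligation. by []. Qed.
Next Obligation. by []. Qed.
Next Obligation. by move=> C X h x /=; rewrite c_cod_id c_dom_id. Qed.
Next Obligation. by move=> C X h a b e /=; rewrite c_cod_comp // c_dom_comp. Qed.

Lemma fmor_codiscrete (C : Defs.cat) (X : Type) (F : functor C (codiscrete_cat X))
    (m : c_mor C) :
  fmor F m = (fob F (c_cod m), fob F (c_dom m)).
Proof.
have := f_dom F m; have := f_cod F m.
by case: (fmor F m) => u v /= -> ->.
Qed.

Section SelfMapsOfjSG.
Variable gT : finGroupType.
Local Open Scope group_scope.

Local Notation selfmap := (qmor (jSG gT) (jSG gT)).
Local Notation fo F := (fob (qfun F)).

Lemma q_lab_fmor_jSG (A : qsch) (H : qmor A (jSG gT)) (m : c_mor (q_cat A)) :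
  q_lab (fmor (qfun H) m) = (fob (qfun H) (c_cod m))^-1 * fob (qfun H) (c_dom m).
Proof. by rewrite fmor_codiscrete. Qed.

Lemma fo_block (F : selfmap) x y x' y' : x^-1 * y = x'^-1 * y' ->
  (fo F x)^-1 * fo F y = (fo F x')^-1 * fo F y'.
Proof.
by move=> e; have := @q_block _ _ F (x, y) (x', y') e; rewrite !q_lab_fmor_jSG.
Qed.

Definition hom_part (F : selfmap) (x : gT) : gT := fo F x * (fo F 1)^-1.

Lemma fo_hom_part (F : selfmap) x : fo F x = hom_part F x * fo F 1.
Proof. by rewrite mulgKV. Qed.

Lemma hom_partM (F : selfmap) : {morph hom_part F : x y / x * y}.
Proof.
move=> x y; have e : x^-1 * (x * y) = 1^-1 * y by rewrite mulKg invg1 mul1g.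
by rewrite /hom_part -[fo F (x * y)](mulKVg (fo F x)) (fo_block F e) !mulgA.
Qed.

Lemma hom_part1 (F : selfmap) : hom_part F 1 = 1.
Proof. exact: mulgV. Qed.

Lemma hom_partV (F : selfmap) x : hom_part F x^-1 = (hom_part F x)^-1.
Proof.
by apply: (mulIg (hom_part F x)); rewrite -hom_partM !mulVg hom_part1.
Qed.

Lemma hom_part_qcomp (F G : selfmap) x :
  hom_part (qcomp F G) x = hom_part F (hom_part G x).
Proof.
rewrite /hom_part /= [fo F (fo G x)]fo_hom_part [fo F (fo G 1)]fo_hom_part.
by rewrite invMg mulgA mulgK -hom_partV -hom_partM.
Qed.

Lemma hom_part_qid x : hom_part (qid (jSG gT)) x = x.
Proof. by rewrite /hom_part /= invg1 mulg1. Qed.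

Lemma homotopy_hom_part (F G : selfmap) :
  homotopy F G -> hom_part F =1 hom_part G.
Proof.
move=> [H [[H0 _] [H1 _]]] x.
have e : (SG_lab (x, x), a01) = (SG_lab ((1 : gT), (1 : gT)), a01).
  by rewrite /SG_lab /= !mulVg.
have := @q_block _ _ H ((x, x), a01) ((1, 1), a01) e.
have E0x := H0 x; have E1x := H1 x; have E01 := H0 1; have E11 := H1 1.
simpl in E0x, E1x, E01, E11.
rewrite !q_lab_fmor_jSG /= E0x E1x E01 E11 => eFG.
by rewrite /hom_part -[fo F x](mulKVg (fo G x)) eFG !mulgA mulgK.
Qed.

Lemma qhtpc_hom_part (F G : selfmap) :
  qhtpc F G -> hom_part F =1 hom_part G.
Proof.
elim=> {F G} [F G [hFG|hGF]|F|F G K _ eFG _ eGK] x //.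
- exact: homotopy_hom_part.
- by rewrite (homotopy_hom_part hGF).
- by rewrite eFG eGK.
Qed.

Lemma homotopy_right_translate (F G : selfmap) k :
  (forall x, fo G x = fo F x * k) -> homotopy F G.
Proof.
move=> eG; pose h (p : gT * bool) := if p.2 then fo F p.1 * k else fo F p.1.
have conj_lab a b : (a * k)^-1 * (b * k) = k^-1 * (a^-1 * b) * k.
  by rewrite invMg !mulgA.
have left_lab a b : (a * k)^-1 * b = k^-1 * (a^-1 * b).
  by rewrite invMg !mulgA.
pose Hf := @codiscrete_functor (q_cat (qprod (jSG gT) qI)) gT h.
have h_block a b : @q_lab (qprod (jSG gT) qI) a = q_lab b ->
    @q_lab (jSG gT) (fmor Hf a) = @q_lab (jSG gT) (fmor Hf b).
  case: a b => [[x y] m] [[x' y'] m'] /= [e <-]; rewrite /SG_lab /h /=.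
  by case: m => /=; rewrite ?conj_lab ?left_lab (fo_block F e).
exists (QMor h_block); split; split=> //= a.
- by rewrite fmor_codiscrete.
- by rewrite fmor_codiscrete /h /= !eG.
Qed.

Lemma qhtpc_of_hom_part (F G : selfmap) :
  hom_part F =1 hom_part G -> qhtpc F G.
Proof.
move=> eFG; apply: rt_step; left.
apply: (@homotopy_right_translate _ _ ((fo F 1)^-1 * fo G 1)) => x.
by rewrite mulgA -/(hom_part F x) eFG mulgKV.
Qed.

Lemma self_heq_hom_part_inj (F : selfmap) : self_heq F -> injective (hom_part F).
Proof.
move=> [F' [_ /qhtpc_hom_part eF'F]] u v e.
by rewrite -(hom_part_qid u) -(hom_part_qid v) -!eF'F !hom_part_qcomp e.
Qed.

(* Junk value [1] when [hom_part F] is not injective. *)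
Definition hom_perm (F : selfmap) : {perm gT} :=
  insubd (1 : {perm gT}) [ffun x => hom_part F x].

Lemma hom_permE (F : selfmap) : injective (hom_part F) -> hom_perm F =1 hom_part F.
Proof.
move=> inj x; rewrite -pvalE /hom_perm /= val_insubd.
suff -> : injectiveb [ffun x => hom_part F x] by rewrite ffunE.
by apply/injectiveP => u v; rewrite !ffunE; apply: inj.
Qed.

Lemma hom_perm_ext (F G : selfmap) :
  hom_part F =1 hom_part G -> hom_perm F = hom_perm G.
Proof. by move=> eFG; congr insubd; apply/ffunP => x; rewrite !ffunE. Qed.

Lemma hom_perm_Aut (F : selfmap) :
  injective (hom_part F) -> hom_perm F \in Aut [set: gT].
Proof.
move=> inj; rewrite inE; apply/andP; split; first by apply/subsetP => x; rewrite inE.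
by apply/morphicP => x y _ _; rewrite !hom_permE // hom_partM.
Qed.

(* Permutations multiply left to right, [(p * q) x = q (p x)]. *)
Lemma hom_perm_qcomp (F G : selfmap) :
  injective (hom_part F) -> injective (hom_part G) ->
  hom_perm (qcomp F G) = hom_perm G * hom_perm F.
Proof.
move=> injF injG; have injFG : injective (hom_part (qcomp F G)).
  by move=> u v; rewrite !hom_part_qcomp => /injF /injG.
by apply/permP => x; rewrite permM !hom_permE // hom_part_qcomp.
Qed.

Lemma morph_block (f : gT -> gT) : {morph f : x y / x * y} ->
  forall a b, @q_lab (jSG gT) a = q_lab b ->
    @q_lab (jSG gT) (fmor (@codiscrete_functor (q_cat (jSG gT)) gT f) a) =
    @q_lab (jSG gT) (fmor (@codiscrete_functor (q_cat (jSG gT)) gT f) b).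
Proof.
move=> fM; have labE x y : (f x)^-1 * f y = f (x^-1 * y).
  by rewrite -{1}(mulKVg x y) fM mulKg.
by move=> [x y] [x' y']; rewrite /= /SG_lab /= !labE => ->.
Qed.

Definition qmor_of_morph (f : gT -> gT) (fM : {morph f : x y / x * y}) :
  selfmap := QMor (morph_block fM).

Lemma hom_part_qmor_of_morph f (fM : {morph f : x y / x * y}) :
  hom_part (qmor_of_morph fM) =1 f.
Proof.
have f1 : f 1 = 1 by apply: (mulgI (f 1)); rewrite -fM !mulg1.
by move=> x; rewrite /hom_part /= f1 invg1 mulg1.
Qed.

Lemma Aut_morph (a : {perm gT}) : a \in Aut [set: gT] -> {morph a : x y / x * y}.
Proof. by move=> /Aut_morphic /morphicP aM x y; apply: aM; rewrite inE. Qed.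

Definition qmor_of_Aut (a : {perm gT}) (aA : a \in Aut [set: gT]) : selfmap :=
  qmor_of_morph (Aut_morph aA).

Lemma hom_perm_qmor_of_Aut (a : {perm gT}) (aA : a \in Aut [set: gT]) :
  hom_perm (qmor_of_Aut aA) = a.
Proof.
have hom_partE := hom_part_qmor_of_morph (Aut_morph aA).
apply/permP => x; rewrite hom_permE ?hom_partE // => u v.
by rewrite !hom_partE; apply: perm_inj.
Qed.

Lemma self_heq_qmor_of_Aut (a : {perm gT}) (aA : a \in Aut [set: gT]) :
  self_heq (qmor_of_Aut aA).
Proof.
have aVA : a^-1 \in Aut [set: gT] by rewrite groupV.
exists (qmor_of_Aut aVA); split; apply: qhtpc_of_hom_part => x;
  by rewrite hom_part_qid !hom_part_qcomp !hom_part_qmor_of_morph ?permK ?permKV.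
Qed.

End SelfMapsOfjSG.

Theorem corollary4p8 (gT : finGroupType) :
  exists Phi : qmor (jSG gT) (jSG gT) -> {perm gT},
    [/\ (forall F, self_heq F -> Phi F \in Aut [set: gT]),
        (forall F F', self_heq F -> self_heq F' ->
           Phi (qcomp F F') = (Phi F * Phi F')%g),
        (forall F F', self_heq F -> self_heq F' ->
           (Phi F = Phi F' <-> qhtpc F F'))
      & (forall a, a \in Aut [set: gT] ->
           exists F, self_heq F /\ Phi F = a)].
Proof.
exists (fun F => (hom_perm F)^-1)%g; split.
- by move=> F /self_heq_hom_part_inj/hom_perm_Aut; rewrite groupV.
- move=> F F' /self_heq_hom_part_inj injF /self_heq_hom_part_inj injF'.
  by rewrite hom_perm_qcomp // invMg.
- move=> F F' /self_heq_hom_part_inj injF /self_heq_hom_part_inj injF'; split.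
  + move=> /invg_inj ePP'; apply: qhtpc_of_hom_part => x.
    by rewrite -!hom_permE // ePP'.
  + by move=> /qhtpc_hom_part/hom_perm_ext ->.
- move=> a aA; have aVA : (a^-1 \in Aut [set: gT])%g by rewrite groupV.
  exists (qmor_of_Aut aVA); split; first exact: self_heq_qmor_of_Aut.
  by rewrite hom_perm_qmor_of_Aut invgK.
Qed.
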